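(* Let $(S,1\cdots1)$ be a tree pattern with all edges contiguous, and let $x$ be a vertex of $S$ that has no right child, such that for every edge $(u,v)$ of $S$ with $v$ the right child of $u$, either $v$ is a leaf or $x$ lies in the subtree $S(v)$. Let $(P,e)$ and $(P',e')$ be tree patterns with $P,P'\in\mathcal{T}_k$, and let $Q$ and $Q'$ be the tree patterns obtained from $(S,1\cdots1)$ by attaching $(P,e)$, respectively $(P',e')$, as the right subtree of $x$ via a non-contiguous edge (all other edge types unchanged). If $(P,e)$ and $(P',e')$ are Wilf-equivalent, then $Q$ and $Q'$ are Wilf-equivalent.
   Context: $\mathcal{T}_n$ is the set of binary trees on $n$ vertices labeled $1,\dots,n$ by the search tree property (after attaching subtrees, vertex labels are reassigned according to this property). $c_L,c_R,p$: left child, right child, parent. A tree pattern is $(P,e)$, $P\in\mathcal{T}_k$, $e\colon[k]\setminus\{\text{root}\}\to\{0,1\}$; the edge $(i,p(i))$ is contiguous if $e(i)=1$ and non-contiguous if $e(i)=0$. $T\in\mathcal{T}_n$ contains $(P,e)$ if there is an injection $f\colon[k]\to[n]$ such that for every non-root $i$ of $P$: if $e(i)=1$, $f(i)$ is the left (resp. right) child of $f(p(i))$ when $i$ is the left (resp. right) child of $p(i)$; if $e(i)=0$, $f(i)$ lies in the left (resp. right) subtree of $f(p(i))$. $\mathcal{T}_n(P,e)$ is the set of avoiders. Two tree patterns $Q,Q'$ are Wilf-equivalent if $|\mathcal{T}_n(Q)|=|\mathcal{T}_n(Q')|$ for all $n\ge0$. *)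

From Stdlib Require Import ClassicalDescription.
From mathcomp Require Import all_boot.

Set Implicit Arguments.
Unset Strict Implicit.
Unset Printing Implicit Defensive.

(* ---------- Binary trees (elements of T_n) ----------
   A binary tree on n vertices; its vertex labels 1..n are determined by the
   search-tree (in-order) property, so we identify a vertex with its path from
   the root: a sequence of directions (false = left, true = right). *)
Inductive btree := Leaf | Node of btree & btree.

Fixpoint bsize (T : btree) : nat :=
  match T with Leaf => 0 | Node l r => (bsize l + bsize r).+1 end.

Fixpoint tvert (T : btree) (p : seq bool) : bool :=
  match T, p with
  | Leaf, _ => false
  | Node _ _, [::] => true
  | Node l r, d :: p' => tvert (if d then r else l) p'
  end.

(* Enumeration of T_n: all binary trees with n vertices
   (fuel f >= n guarantees termination). *)
Fixpoint trees_f (f n : nat) : seq btree :=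
  match n with
  | 0 => [:: Leaf]
  | n'.+1 =>
      match f with
      | 0 => [::]
      | f'.+1 =>
          flatten [seq [seq Node l r | l <- trees_f f' i, r <- trees_f f' (n' - i)]
                  | i <- iota 0 n]
      end
  end.

Definition trees (n : nat) : seq btree := trees_f n n.

(* ---------- Tree patterns (P, e) ----------
   A pattern is a nonempty binary tree; each existing child carries the type
   of the edge joining it to its parent: true = contiguous (e = 1),
   false = non-contiguous (e = 0). *)
Inductive pat := PNode of option (bool * pat) & option (bool * pat).

Definition child (d : bool) (P : pat) : option (bool * pat) :=
  let: PNode l r := P in if d then r else l.

Fixpoint psize (P : pat) : nat :=
  let: PNode l r := P in
  (match l with Some (_, Q) => psize Q | None => 0 end +
   match r with Some (_, Q) => psize Q | None => 0 end).+1.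

Fixpoint psub (P : pat) (v : seq bool) : option pat :=
  match v with
  | [::] => Some P
  | d :: v' => match child d P with
               | Some (_, Q) => psub Q v'
               | None => None
               end
  end.

Definition pvert (P : pat) (v : seq bool) : Prop := psub P v <> None.

Definition contains (T : btree) (P : pat) : Prop :=
  exists f : seq bool -> seq bool,
    (forall v, pvert P v -> tvert T (f v)) /\
    (forall u v, pvert P u -> pvert P v -> f u = f v -> u = v) /\
    (forall v d c R Q, psub P v = Some R -> child d R = Some (c, Q) ->
       if c then f (rcons v d) = rcons (f v) d
       else exists s, f (rcons v d) = f v ++ d :: s).

Definition containsb (T : btree) (P : pat) : bool :=
  if excluded_middle_informative (contains T P) then true else false.

Definition num_avoiders (P : pat) (n : nat) : nat :=
  count (fun T => ~~ containsb T P) (trees n).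

Definition wilf_equiv (P P' : pat) : Prop :=
  forall n, num_avoiders P n = num_avoiders P' n.

Definition all_contiguous (S : pat) : Prop :=
  forall v d c R Q, psub S v = Some R -> child d R = Some (c, Q) -> c = true.

Fixpoint graft (S : pat) (x : seq bool) (o : option (bool * pat)) : pat :=
  match x with
  | [::] => let: PNode l _ := S in PNode l o
  | d :: x' =>
      let: PNode l r := S in
      let g := omap (fun cq : bool * pat => (cq.1, graft cq.2 x' o)) in
      if d then PNode l (g r) else PNode (g l) r
  end.

Definition attach_right_nc (S : pat) (x : seq bool) (P : pat) : pat :=
  graft S x (Some (false, P)).

From HB Require Import structures.
From Stdlib Require Import ClassicalDescription.
From mathcomp Require Import all_boot.

Set Implicit Arguments.
Unset Strict Implicit.
Unset Printing Implicit Defensive.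

(* Since S is all-contiguous, T contains Q = S + (P attached by a
   non-contiguous right edge at x) iff some translate of S occurs in T with x
   sent to a vertex y (an anchor) whose right subtree contains P.  Wilf
   equivalence of P and P' yields a size-preserving bijection phi of trees
   exchanging P-containment with P'-containment.  Replace by its phi-image the
   right subtree of every anchor that does not itself lie in the right subtree
   of another anchor.  Because every right child of S is a leaf or an ancestor
   of x, a translate of S whose x-image lies outside the replaced subtrees only
   meets them at leaves of S, where only the (preserved) size of the replaced
   subtree matters; hence these outermost anchors are the same before and
   after, the construction is inverted by phi^-1, and it maps the trees
   containing Q onto those containing Q'. *)

Definition pbool (A : Prop) : bool := if excluded_middle_informative A then true else false.

Lemma pboolP (A : Prop) : reflect A (pbool A).
Proof. by rewrite /pbool; case: excluded_middle_informative => ?; constructor. Qed.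

Lemma pbool_iff (A B : Prop) : (A <-> B) -> pbool A = pbool B.
Proof. by move=> AB; apply/pboolP/pboolP => /AB. Qed.

Lemma containsbP T P : reflect (contains T P) (containsb T P).
Proof. exact: pboolP. Qed.

Lemma catI (T : Type) (s : seq T) : injective (cat s).
Proof. by move=> u v /(congr1 (drop (size s))); rewrite !drop_size_cat. Qed.

Lemma cat_eq_cat (T : Type) (a b c d : seq T) : a ++ b = c ++ d ->
  (exists2 m, c = a ++ m & b = m ++ d) \/ (exists m0 m, a = c ++ m0 :: m /\ d = m0 :: m ++ b).
Proof.
elim: a c => [|a0 a IHa] c; first by move=> /= ->; left; exists c.
case: c => [|c0 c] /=; first by move=> <-; right; exists a0, a.
by move=> [<-] /IHa[[m -> ->]|[m0 [m [-> ->]]]]; [left; exists m|right; exists m0, m].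
Qed.

Lemma prefix_rconsE (T : eqType) (u v : seq T) d :
  prefix u (rcons v d) = prefix u v || (u == rcons v d).
Proof.
apply/idP/orP => [/prefixP[w]|[/prefix_trans|/eqP ->]]; last 2 first.
- by apply; apply: prefix_rcons.
- exact: prefix_refl.
case/lastP: w => [|w e]; first by rewrite cats0 => ->; right.
rewrite -rcons_cat => /eqP; rewrite eqseq_rcons => /andP[/eqP -> _].
by left; apply: prefix_prefix.
Qed.

Lemma uniq_flatten_keyed (I T : eqType) (key : T -> I) (F : I -> seq T) (s : seq I) :
  uniq s -> {in s, forall i, uniq (F i)} -> {in s, forall i, {in F i, forall t, key t = i}} ->
  uniq (flatten (map F s)).
Proof.
elim: s => //= i s IHs /andP[i_notin_s s_uniq] F_uniq F_key.
rewrite cat_uniq F_uniq ?mem_head // IHs //; last 2 first.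
- by move=> j j_in; apply: F_uniq; rewrite inE j_in orbT.
- by move=> j j_in; apply: F_key; rewrite inE j_in orbT.
rewrite andbT; apply/hasP => -[t /flatten_mapP[j j_in t_in] t_in_i].
move: i_notin_s; rewrite -(F_key i _ t t_in_i) ?mem_head //.
by rewrite (F_key j _ t t_in) ?j_in // inE j_in orbT.
Qed.

Section FilterMatching.

Variables (T : eqType) (s : seq T).
Hypothesis s_uniq : uniq s.

Definition match_filter (a b : pred T) (t : T) : T :=
  nth t (filter b s) (index t (filter a s)).

Lemma match_filterP (a b : pred T) t : count a s = count b s -> t \in s -> a t ->
  let u := match_filter a b t in [/\ u \in s, b u & match_filter b a u = t].
Proof.
move=> count_ab t_in a_t u.
have lt_u : index t (filter a s) < size (filter b s).
  by rewrite size_filter -count_ab -size_filter index_mem mem_filter a_t.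
have := mem_nth t lt_u; rewrite mem_filter -/u => /andP[b_u u_in]; split=> //.
by rewrite /match_filter /u index_uniq ?filter_uniq // nth_index // mem_filter a_t.
Qed.

Definition match_pred (a b : pred T) (t : T) : T :=
  if a t then match_filter a b t else match_filter (predC a) (predC b) t.

Lemma match_predP (a b : pred T) t : count a s = count b s -> t \in s ->
  let u := match_pred a b t in [/\ u \in s, b u = a t & match_pred b a u = t].
Proof.
move=> count_ab t_in; rewrite /match_pred; case: ifP => a_t.
  by have [u_in -> uK] := match_filterP count_ab t_in a_t.
have count_ab' : count (predC a) s = count (predC b) s.
  by apply/eqP; rewrite -(eqn_add2l (count a s)) {2}count_ab !count_predC.
by have [u_in /negbTE -> uK] := match_filterP count_ab' t_in (negbT a_t).
Qed.

End FilterMatching.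

Definition btree_eq_dec : comparable btree.
Proof. rewrite /comparable /decidable; decide equality. Defined.

HB.instance Definition _ := hasDecEq.Build btree (compareP btree_eq_dec).

Lemma trees_fS f n : trees_f f.+1 n.+1 =
  flatten [seq [seq Node l r | l <- trees_f f i, r <- trees_f f (n - i)] | i <- iota 0 n.+1].
Proof. by []. Qed.

Lemma mem_trees_f f n T : n <= f -> (T \in trees_f f n) = (bsize T == n).
Proof.
elim: f n T => [|f IHf] [|n] T //; try by move=> _; case: T.
rewrite ltnS trees_fS => le_n_f; apply/flatten_mapP/eqP.
- move=> [i]; rewrite mem_iota ltnS => /andP[_ le_i_n] /allpairsP[[l r] /= [l_in r_in ->]].
  move: l_in r_in; rewrite IHf ?(leq_trans le_i_n) // IHf ?(leq_trans (leq_subr i n)) //.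
  by move=> /eqP /= -> /eqP ->; rewrite subnKC.
- case: T => [|l r] // [size_lr]; have le_l_n : bsize l <= n by rewrite -size_lr leq_addr.
  exists (bsize l); first by rewrite mem_iota ltnS.
  apply/allpairsP; exists (l, r); rewrite /= !IHf ?(leq_trans le_l_n) //.
  - by rewrite -size_lr addKn.
  - by rewrite (leq_trans (leq_subr _ n)).
Qed.

Lemma uniq_trees_f f n : n <= f -> uniq (trees_f f n).
Proof.
elim: f n => [|f IHf] [|n] //; rewrite ltnS trees_fS => le_n_f.
apply: (uniq_flatten_keyed (key := fun T => if T is Node l _ then bsize l else 0)).
- exact: iota_uniq.
- move=> i; rewrite mem_iota ltnS => /andP[_ le_i_n].
  apply: allpairs_uniq; rewrite ?IHf ?(leq_trans le_i_n) ?(leq_trans (leq_subr i n)) //.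
  by move=> [? ?] [? ?] _ _ [-> ->].
- move=> i; rewrite mem_iota ltnS => /andP[_ le_i_n] _ /allpairsP[[l r] /= [l_in _ ->]].
  by apply/eqP; rewrite -(mem_trees_f _ (leq_trans le_i_n le_n_f)).
Qed.

Lemma mem_trees n T : (T \in trees n) = (bsize T == n).
Proof. exact: mem_trees_f. Qed.

Lemma uniq_trees n : uniq (trees n).
Proof. exact: uniq_trees_f. Qed.

Lemma wilf_equiv_sym P P' : wilf_equiv P P' -> wilf_equiv P' P.
Proof. by move=> PP' n. Qed.

Lemma wilf_equiv_of_bij (Q Q' : pat) (f g : btree -> btree) :
  cancel f g -> cancel g f -> (forall T, bsize (f T) = bsize T) ->
  (forall T, containsb (f T) Q' = containsb T Q) -> wilf_equiv Q Q'.
Proof.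
move=> fK gK bsize_f contains_f n.
have perm_f : perm_eq (map f (trees n)) (trees n).
  apply: uniq_perm; rewrite ?map_inj_uniq ?uniq_trees //; first exact: can_inj fK.
  move=> T; apply/mapP/idP => [[U U_in ->]|T_in].
    by rewrite mem_trees bsize_f -mem_trees.
  by exists (g T); rewrite ?gK // mem_trees -bsize_f gK -mem_trees.
rewrite /num_avoiders -[in RHS](permP perm_f) count_map.
by apply: eq_count => T /=; rewrite contains_f.
Qed.

Definition wilf_match (P P' : pat) (T : btree) : btree :=
  match_pred (trees (bsize T)) (containsb^~ P) (containsb^~ P') T.

Section WilfMatch.

Variables P P' : pat.
Hypothesis PP' : wilf_equiv P P'.

Lemma wilf_matchP T :
  [/\ bsize (wilf_match P P' T) = bsize T,
      containsb (wilf_match P P' T) P' = containsb T P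
    & wilf_match P' P (wilf_match P P' T) = T].
Proof.
set n := bsize T.
have count_PP' : count (containsb^~ P) (trees n) = count (containsb^~ P') (trees n).
  apply/eqP; rewrite -(eqn_add2r (num_avoiders P n)) {2}PP'.
  by rewrite /num_avoiders !count_predC.
have T_in : T \in trees n by rewrite mem_trees.
have [] := match_predP (uniq_trees n) count_PP' T_in.
by rewrite mem_trees /wilf_match => /eqP ->.
Qed.

Lemma bsize_wilf_match T : bsize (wilf_match P P' T) = bsize T.
Proof. by case: (wilf_matchP T). Qed.

Lemma wilf_matchK : cancel (wilf_match P P') (wilf_match P' P).
Proof. by move=> T; case: (wilf_matchP T). Qed.

Lemma contains_wilf_match T : contains T P -> contains (wilf_match P P' T) P'.
Proof. by move=> /containsbP T_P; apply/containsbP; case: (wilf_matchP T) => _ ->. Qed.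

End WilfMatch.

Fixpoint tsub (T : btree) (p : seq bool) {struct p} : btree :=
  if p is d :: p' then
    if T is Node l r then tsub (if d then r else l) p' else Leaf
  else T.

Lemma tsub_leaf p : tsub Leaf p = Leaf.
Proof. by case: p. Qed.

Lemma tsub_cat T p q : tsub T (p ++ q) = tsub (tsub T p) q.
Proof. elim: p T => [|d p IHp] [|l r] //=; exact/esym/tsub_leaf. Qed.

Lemma tsub_rcons T p d : tsub T (rcons p d) = tsub (tsub T p) [:: d].
Proof. by rewrite -cats1 tsub_cat. Qed.

Lemma tvert_tsub T p q : tvert (tsub T p) q = tvert T (p ++ q).
Proof. by elim: p T => [|d p IHp] [|l r] //=; case: q. Qed.

Lemma tvertE T p : tvert T p = (tsub T p != Leaf).
Proof. by rewrite -[p]cats0 -tvert_tsub cats0; case: (tsub T p). Qed.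

Definition edge_type (P : pat) (v : seq bool) (d : bool) : option bool :=
  obind (fun R => omap fst (child d R)) (psub P v).

Lemma psub_cat P u w : psub P (u ++ w) = obind (psub^~ w) (psub P u).
Proof. by elim: u P => [|b u IHu] [l r] //=; case: b; [case: r => [[]|]|case: l => [[]|]]. Qed.

Lemma pvert_nil P : pvert P [::].
Proof. by case: P. Qed.

Lemma pvert_catl P u w : pvert P (u ++ w) -> pvert P u.
Proof. by rewrite /pvert psub_cat; case: (psub P u). Qed.

Lemma pvert_rcons P v d : pvert P (rcons v d) <-> edge_type P v d <> None.
Proof.
rewrite /pvert /edge_type -cats1 psub_cat; case: (psub P v) => //= R.
by case: R d => [l r] [] /=; [case: r => [[c []]|] | case: l => [[c []]|]].
Qed.

Lemma pvert_edge_type P v d c : edge_type P v d = Some c -> pvert P v.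
Proof. by rewrite /edge_type /pvert; case: (psub P v). Qed.

Lemma pvert_rcons_edge_type P v d : pvert P (rcons v d) -> exists c, edge_type P v d = Some c.
Proof. by move/pvert_rcons; case: (edge_type P v d) => [c|] // _; exists c. Qed.

Lemma contiguous_edge_type S v d c : all_contiguous S -> edge_type S v d = Some c -> c.
Proof.
move=> S_contig; rewrite /edge_type; case Sv: (psub S v) => [R|] //=.
by case Rd: (child d R) => [[c' Q]|] //= [<-]; rewrite (S_contig _ _ _ _ _ Sv Rd).
Qed.

Definition respects_edge (f : seq bool -> seq bool) v d (c : bool) : Prop :=
  if c then f (rcons v d) = rcons (f v) d else exists s, f (rcons v d) = f v ++ d :: s.

Definition embedding (T : btree) (P : pat) (f : seq bool -> seq bool) : Prop :=
  [/\ forall v, pvert P v -> tvert T (f v),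
      forall u v, pvert P u -> pvert P v -> f u = f v -> u = v
    & forall v d c, edge_type P v d = Some c -> respects_edge f v d c].

Lemma containsE T P : contains T P <-> exists f, embedding T P f.
Proof.
split.
- move=> [f [f_vert [f_inj f_edge]]]; exists f; split=> // v d c; rewrite /edge_type.
  case Ev: (psub P v) => [R|] //=; case Ed: (child d R) => [[c' Q]|] //= [<-].
  exact: f_edge Ed.
- move=> [f [f_vert f_inj f_edge]]; exists f; split=> //; split=> // v d c R Q Ev Ed.
  by apply: f_edge; rewrite /edge_type Ev /= Ed.
Qed.

Lemma contains_tsub T q P : contains (tsub T q) P -> contains T P.
Proof.
rewrite !containsE => -[f [f_vert f_inj f_edge]]; exists (fun v => q ++ f v); split.
- by move=> v /f_vert; rewrite tvert_tsub.
- by move=> u v u_P v_P /catI; apply: f_inj.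
- move=> v d c /f_edge; rewrite /respects_edge; case: c => [->|[s ->]].
    by rewrite rcons_cat.
  by exists s; rewrite catA.
Qed.

Lemma embedding_tsub T P f q : embedding T P f ->
  (forall w, pvert P w -> exists s, f w = q ++ s) -> contains (tsub T q) P.
Proof.
move=> [f_vert f_inj f_edge] f_below; pose g w := drop (size q) (f w).
have fE w : pvert P w -> f w = q ++ g w by move=> /f_below[s fw]; rewrite /g fw drop_size_cat.
apply/containsE; exists g; split.
- by move=> w w_P; rewrite tvert_tsub -fE //; apply: f_vert.
- by move=> u v u_P v_P guv; apply: f_inj => //; rewrite !fE // guv.
- move=> v d c vd_c; have v_P := pvert_edge_type vd_c.
  have vd_P : pvert P (rcons v d) by apply/pvert_rcons; rewrite vd_c.
  move: (f_edge v d c vd_c); rewrite /respects_edge !fE //; case: c {vd_c} => [|[s]].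
    by rewrite rcons_cat => /catI.
  by rewrite -catA => /catI ->; exists s.
Qed.

Lemma embedding_below T P f v d w : embedding T P f -> pvert P (rcons v d ++ w) ->
  exists s, f (rcons v d ++ w) = f v ++ d :: s.
Proof.
move=> [_ _ f_edge]; elim/last_ind: w => [|w e IHw] P_vdw.
  rewrite cats0 in P_vdw *; have [c vd_c] := pvert_rcons_edge_type P_vdw.
  have := f_edge _ _ _ vd_c; rewrite /respects_edge; case: c {vd_c} => [->|//].
  by exists [::]; rewrite cats1.
rewrite -rcons_cat in P_vdw; have [c vdw_c] := pvert_rcons_edge_type P_vdw.
have [s fE] := IHw (pvert_edge_type vdw_c).
have := f_edge _ _ _ vdw_c; rewrite /respects_edge rcons_cat fE.
case: c {vdw_c} => [->|[s' ->]]; first by exists (rcons s e); rewrite rcons_cat rcons_cons.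
by exists (s ++ e :: s'); rewrite -catA.
Qed.

Lemma edge_type_graft S x o v d :
  ~~ prefix x v -> edge_type (graft S x o) v d = edge_type S v d.
Proof.
elim: x S v d => [|b x IHx] [l r] [|b' v] d //.
  by rewrite /edge_type /=; case: b; case: d => //=; [case: r => [[]|]|case: l => [[]|]].
rewrite prefix_cons /edge_type /=; case: b; case: b' => //= x_v.
- by case: r => [[c R]|] //=; apply: IHx.
- by case: l => [[c R]|] //=; apply: IHx.
Qed.

Lemma psub_graft_cat S x o w :
  psub (graft S x o) (x ++ w) = obind (fun X => psub (graft X [::] o) w) (psub S x).
Proof. by elim: x S => [|[] x IHx] [l r] //=; [case: r => [[]|]|case: l => [[]|]]. Qed.

(* For an all-contiguous S, an embedding of S into T is a translation: S occurs rooted at t. *)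
Definition occurs_at (S : pat) (T : btree) (t : seq bool) : Prop :=
  forall v, pvert S v -> tvert T (t ++ v).

Section Attach.

Variables (S P : pat) (x : seq bool) (X : pat).
Hypotheses (Sx : psub S x = Some X) (X_noright : child true X = None).

Let Q := attach_right_nc S x P.

Lemma pvert_S_x : pvert S x.
Proof. by rewrite /pvert Sx. Qed.

Lemma edge_type_attach_in w d : edge_type Q (x ++ true :: w) d = edge_type P w d.
Proof. by rewrite /edge_type /Q /attach_right_nc psub_graft_cat Sx; case: X. Qed.

Lemma edge_type_attach_root : edge_type Q x true = Some false.
Proof.
by rewrite /edge_type /Q /attach_right_nc -[x in psub _ x]cats0 psub_graft_cat Sx; case: X.
Qed.

Lemma edge_type_attach_out v d :
  ~~ prefix (rcons x true) (rcons v d) -> edge_type Q v d = edge_type S v d.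
Proof.
move=> out; case x_v: (prefix x v); last by apply: edge_type_graft; rewrite x_v.
move: x_v out => /prefixP[w ->]; rewrite rcons_cat -!cats1 prefix_catr // eqxx /=.
rewrite /edge_type /Q /attach_right_nc psub_graft_cat psub_cat Sx /=; case: X => l r.
by case: w => [|[] w]; rewrite /= ?prefix0s //; case: d.
Qed.

Lemma pvert_attach_in w : pvert Q (x ++ true :: w) <-> pvert P w.
Proof.
case/lastP: w => [|w d].
  by rewrite cats1 pvert_rcons edge_type_attach_root; split=> // _; apply: pvert_nil.
by rewrite -rcons_cons -rcons_cat !pvert_rcons edge_type_attach_in.
Qed.

Lemma pvert_attach_out v : ~~ prefix (rcons x true) v -> pvert Q v <-> pvert S v.
Proof.
case/lastP: v => [|v d] out; first by split=> _; apply: pvert_nil.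
by rewrite !pvert_rcons edge_type_attach_out.
Qed.

Lemma pvert_S_out v : pvert S v -> ~~ prefix (rcons x true) v.
Proof.
move=> S_v; apply/negP => /prefixP[w v_eq]; move: S_v; rewrite v_eq => /pvert_catl.
by rewrite pvert_rcons /edge_type Sx /= X_noright.
Qed.

Lemma pvert_attachP v : pvert Q v ->
  pvert S v /\ ~~ prefix (rcons x true) v \/ exists2 w, v = x ++ true :: w & pvert P w.
Proof.
case x_v: (prefix (rcons x true) v).
  by move: x_v => /prefixP[w ->]; rewrite cat_rcons pvert_attach_in => P_w; right; exists w.
by rewrite pvert_attach_out ?x_v //; left.
Qed.

Hypothesis S_contig : all_contiguous S.

Definition anchor (T : btree) (y : seq bool) : Prop := exists2 t, y = t ++ x & occurs_at S T t.

Lemma contains_attach_anchor T :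
  contains T Q -> exists2 y, anchor T y & contains (tsub T (rcons y true)) P.
Proof.
move=> /containsE[f f_emb]; have [f_vert f_inj f_edge] := f_emb; set t := f [::].
have f_translate v : pvert S v -> f v = t ++ v.
  elim/last_ind: v => [|v d IHv] S_vd; first by rewrite cats0.
  have [c vd_c] := pvert_rcons_edge_type S_vd.
  have := f_edge v d c; rewrite edge_type_attach_out ?vd_c; last exact: pvert_S_out.
  rewrite /respects_edge (contiguous_edge_type S_contig vd_c) => /(_ erefl) ->.
  by rewrite IHv ?rcons_cat //; apply: pvert_edge_type vd_c.
pose h w := f (x ++ true :: w).
have h_emb : embedding T P h.
  split=> [w P_w|u w P_u P_w|w d c wd_c]; first by apply: f_vert; rewrite pvert_attach_in.
    by move/f_inj; rewrite !pvert_attach_in => /(_ P_u P_w) /catI[].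
  have := f_edge (x ++ true :: w) d c; rewrite edge_type_attach_in => /(_ wd_c).
  by rewrite /respects_edge /h rcons_cat rcons_cons.
exists (t ++ x).
  exists t => // v S_v; rewrite -f_translate //.
  by apply/f_vert/pvert_attach_out/S_v/pvert_S_out.
apply: (embedding_tsub h_emb) => w P_w; rewrite /h -cat_rcons.
have [|s ->] := embedding_below (v := x) (d := true) (w := w) f_emb.
  by rewrite cat_rcons pvert_attach_in.
by exists s; rewrite f_translate ?cat_rcons //; apply: pvert_S_x.
Qed.

Lemma anchor_contains_attach T y :
  anchor T y -> contains (tsub T (rcons y true)) P -> contains T Q.
Proof.
move=> [t -> t_occ] /containsE[g [g_vert g_inj g_edge]].
pose f v :=
  if prefix (rcons x true) v then t ++ x ++ true :: g (drop (size x).+1 v) else t ++ v.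
have f_in w : f (x ++ true :: w) = t ++ x ++ true :: g w.
  by rewrite /f -cat_rcons prefix_prefix drop_size_cat ?size_rcons.
have f_out v : ~~ prefix (rcons x true) v -> f v = t ++ v by rewrite /f => /negbTE ->.
have in_out w v : ~~ prefix (rcons x true) v -> x ++ true :: w <> v.
  by move=> out v_eq; move: out; rewrite -v_eq -cat_rcons prefix_prefix.
apply/containsE; exists f; split.
- move=> v /pvert_attachP[[S_v out]|[w -> P_w]]; first by rewrite f_out //; apply: t_occ.
  by rewrite f_in; move: (g_vert w P_w); rewrite tvert_tsub rcons_cat -catA cat_rcons.
- move=> u v /pvert_attachP[[_ u_out]|[w -> P_w]] /pvert_attachP[[_ v_out]|[w' -> P_w']].
  + by rewrite !f_out // => /catI.
  + by rewrite f_out // f_in => /catI/esym/(in_out _ _ u_out).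
  + by rewrite (f_out v) // f_in => /catI/(in_out _ _ v_out).
  + by rewrite !f_in => /catI/catI[] /g_inj ->.
- move=> v d c; case x_v: (prefix (rcons x true) v).
    move: x_v => /prefixP[w ->]; rewrite cat_rcons edge_type_attach_in => /g_edge.
    rewrite /respects_edge rcons_cat rcons_cons !f_in.
    by case: c => [->|[s ->]]; [rewrite !rcons_cat rcons_cons|exists s; rewrite -!catA].
  case x_vd: (prefix (rcons x true) (rcons v d)).
    move: x_vd; rewrite prefix_rconsE x_v /= => /eqP /rcons_inj[x_eq <-]; subst v.
    rewrite edge_type_attach_root => -[<-]; rewrite /respects_edge (f_out x) ?x_v //.
    by rewrite -cats1 f_in; exists (g [::]); rewrite -catA.
  rewrite edge_type_attach_out ?x_vd // => vd_c; rewrite (contiguous_edge_type S_contig vd_c).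
  by rewrite /respects_edge !f_out ?x_v ?x_vd // rcons_cat.
Qed.

End Attach.

Definition right_child_leaf_or_above (S : pat) (x : seq bool) : Prop :=
  forall u V, psub S (rcons u true) = Some V ->
    (child false V = None /\ child true V = None) \/ (exists s, x = rcons u true ++ s).

Section Swap.

Variables (S : pat) (x : seq bool) (phi : btree -> btree).

(* [swap_at T U p] rebuilds the subtree [U] of [T] at position [p]; anchors are
   always read off the original tree [T]. *)
Fixpoint swap_at (T U : btree) (p : seq bool) : btree :=
  match U with
  | Leaf => Leaf
  | Node l r => Node (swap_at T l (rcons p false))
      (if pbool (anchor S x T p) then phi r else swap_at T r (rcons p true))
  end.

Definition swap (T : btree) : btree := swap_at T T [::].

Definition unswapped (T : btree) (p : seq bool) : Prop :=
  forall y s, p = y ++ true :: s -> ~ anchor S x T y.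

Lemma unswapped_nil T : unswapped T [::].
Proof. by move=> [|? ?] s. Qed.

Lemma unswapped_rcons T p d :
  unswapped T (rcons p d) <-> unswapped T p /\ (d -> ~ anchor S x T p).
Proof.
split=> [p_unsw|[p_unsw p_anchor] y s].
  split=> [y s p_eq|]; first by apply: (p_unsw y (rcons s d)); rewrite p_eq rcons_cat.
  by case: d p_unsw => // p_unsw _; apply: (p_unsw p [::]); rewrite cats1.
case/lastP: s => [|s e] /eqP; rewrite ?cats1 -?rcons_cons -?rcons_cat eqseq_rcons.
  by move=> /andP[/eqP <- /eqP d_true]; apply: p_anchor; rewrite d_true.
by move=> /andP[/eqP p_eq _]; apply: p_unsw p_eq.
Qed.

Lemma swapped_below_anchor T q : ~ unswapped T q ->
  exists y s, [/\ unswapped T y, anchor S x T y & q = y ++ true :: s].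
Proof.
elim/last_ind: q => [|q d IHq] q_sw; first by case: q_sw; apply: unswapped_nil.
have [q_unsw|/IHq[y [s [y_unsw y_anchor ->]]]] := excluded_middle_informative (unswapped T q).
  have [q_anchor|q_nanchor] := excluded_middle_informative (anchor S x T q).
    case: d q_sw => q_sw; first by exists q, [::]; rewrite cats1.
    by case: q_sw; apply/unswapped_rcons.
  by case: q_sw; apply/unswapped_rcons; split=> // _.
by exists y, (rcons s d); rewrite rcons_cat rcons_cons.
Qed.

Lemma tsub_swap T p : unswapped T p -> tsub (swap T) p = swap_at T (tsub T p) p.
Proof.
elim/last_ind: p => [//|p d IHp /unswapped_rcons[p_unsw p_anchor]].
rewrite -!cats1 !tsub_cat IHp //; case: (tsub T p) => [|l r] //=.
rewrite cats1; case: d p_anchor => [/(_ isT) p_nanchor|//].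
by case: (pboolP (anchor S x T p)).
Qed.

Lemma tvert_swap T p : unswapped T p -> tvert (swap T) p = tvert T p.
Proof. by move=> p_unsw; rewrite !tvertE tsub_swap //; case: (tsub T p). Qed.

Hypothesis S_x : pvert S x.

Lemma anchor_tvert T y : anchor S x T y -> tvert T y.
Proof. by move=> [t -> t_occ]; apply: t_occ. Qed.

Lemma tsub_swap_anchor T y : unswapped T y -> anchor S x T y ->
  tsub (swap T) (rcons y true) = phi (tsub T (rcons y true)).
Proof.
move=> y_unsw y_anchor; rewrite -!cats1 !tsub_cat tsub_swap //.
move: (anchor_tvert y_anchor); rewrite tvertE; case: (tsub T y) => [|l r] //= _.
by case: (pboolP (anchor S x T y)).
Qed.

Hypothesis bsize_phi : forall R, bsize (phi R) = bsize R.

Lemma bsize_swap_at T U p : bsize (swap_at T U p) = bsize U.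
Proof.
by elim: U p => [|l IHl r IHr] p //=; rewrite IHl; case: pbool; rewrite ?bsize_phi ?IHr.
Qed.

Lemma bsize_swap T : bsize (swap T) = bsize T.
Proof. exact: bsize_swap_at. Qed.

Lemma tvert_swap_anchor T y : unswapped T y -> anchor S x T y ->
  tvert (swap T) (rcons y true) = tvert T (rcons y true).
Proof.
move=> y_unsw y_anchor; rewrite !tvertE tsub_swap_anchor //.
by case: (phi _) (bsize_phi (tsub T (rcons y true))) => [|? ?]; case: (tsub T _).
Qed.

Hypothesis S_right : right_child_leaf_or_above S x.

(* A vertex t ++ v of a copy of S anchored at an unswapped p is either
   unswapped, or the root of a replaced subtree: the right child of S on the
   way down is then a leaf of S, since it cannot be above x. *)
Lemma anchor_swap T p : unswapped T p -> anchor S x (swap T) p <-> anchor S x T p.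
Proof.
move=> p_unsw.
suff occ_swap t v : p = t ++ x -> pvert S v -> tvert (swap T) (t ++ v) = tvert T (t ++ v).
  split=> -[t p_eq t_occ]; exists t => // v S_v.
    by rewrite -(occ_swap t v p_eq S_v); apply: t_occ.
  by rewrite (occ_swap t v p_eq S_v); apply: t_occ.
move=> p_eq S_v.
have [|/swapped_below_anchor[y [s [y_unsw y_anchor tv_eq]]]] :=
  excluded_middle_informative (unswapped T (t ++ v)); first exact: tvert_swap.
have [[m y_eq v_eq]|[m0 [m [t_eq [m0_true _]]]]] := cat_eq_cat tv_eq; last first.
  by case: (p_unsw y (m ++ x)); rewrite // p_eq t_eq -m0_true -catA.
have S_m : pvert S (rcons m true) by move: S_v; rewrite v_eq -cat_rcons => /pvert_catl.
case Sm: (psub S (rcons m true)) S_m => [V|//] _.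
have [[V_noleft V_noright]|[s' x_eq]] := S_right Sm; last first.
  by case: (p_unsw y s'); rewrite // p_eq x_eq y_eq cat_rcons catA.
case: s v_eq tv_eq => [|s0 s] v_eq tv_eq; first by rewrite tv_eq cats1 tvert_swap_anchor.
move: S_v; rewrite {}v_eq -!cat_rcons => /pvert_catl /pvert_rcons.
by rewrite /edge_type Sm; clear tv_eq; case: s0; rewrite /= ?V_noleft ?V_noright.
Qed.

End Swap.

Section SwapBijection.

Variables (S : pat) (x : seq bool) (phi phi' : btree -> btree).
Hypotheses (S_x : pvert S x) (bsize_phi : forall R, bsize (phi R) = bsize R).
Hypotheses (S_right : right_child_leaf_or_above S x) (phiK : cancel phi phi').

Lemma swapK : cancel (swap S x phi) (swap S x phi').
Proof.
move=> T; set T' := swap S x phi T.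
suff swap_atK U p : unswapped S x T p -> tsub T p = U -> swap_at S x phi' T' (tsub T' p) p = U.
  exact: (swap_atK T [::] (@unswapped_nil S x T) erefl).
elim: U p => [|l IHl r IHr] p p_unsw TpE; rewrite /T' tsub_swap // TpE //= -/T'.
rewrite (pbool_iff (anchor_swap S_x bsize_phi S_right p_unsw)); congr Node.
  have pl_unsw : unswapped S x T (rcons p false) by apply/unswapped_rcons.
  by rewrite -[RHS](IHl _ pl_unsw) /T' ?tsub_swap ?tsub_rcons ?TpE.
case: (pboolP (anchor S x T p)) => [_|p_nanchor]; first exact: phiK.
have pr_unsw : unswapped S x T (rcons p true) by apply/unswapped_rcons.
by rewrite -[RHS](IHr _ pr_unsw) /T' ?tsub_swap ?tsub_rcons ?TpE.
Qed.

End SwapBijection.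

Section SwapContains.

Variables (S P P' X : pat) (x : seq bool) (phi : btree -> btree).
Hypotheses (S_contig : all_contiguous S) (S_right : right_child_leaf_or_above S x).
Hypotheses (Sx : psub S x = Some X) (X_noright : child true X = None).
Hypothesis bsize_phi : forall R, bsize (phi R) = bsize R.
Hypothesis phi_contains : forall R, contains R P -> contains (phi R) P'.

Lemma contains_swap T :
  contains T (attach_right_nc S x P) -> contains (swap S x phi T) (attach_right_nc S x P').
Proof.
have S_x := pvert_S_x Sx.
move=> /(contains_attach_anchor Sx X_noright S_contig)[y y_anchor y_P].
have [y0 [y0_unsw y0_anchor y0_P]] : exists y0, [/\ unswapped S x T y0, anchor S x T y0
    & contains (tsub T (rcons y0 true)) P].
  have [y_unsw|/swapped_below_anchor[y0 [s [y0_unsw y0_anchor y_eq]]]] :=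
    excluded_middle_informative (unswapped S x T y); first by exists y.
  exists y0; split=> //; apply: (@contains_tsub _ (rcons s true)).
  by rewrite -tsub_cat cat_rcons -rcons_cons -rcons_cat -y_eq.
apply: (anchor_contains_attach Sx S_contig (y := y0)).
  exact/(anchor_swap S_x bsize_phi S_right y0_unsw).
by rewrite (tsub_swap_anchor phi S_x y0_unsw y0_anchor); apply: phi_contains.
Qed.

End SwapContains.

Theorem lemma17 (S : pat) (x : seq bool) (P P' : pat) :
  all_contiguous S ->
  (exists X, psub S x = Some X /\ child true X = None) ->
  (forall u V, psub S (rcons u true) = Some V ->
     (child false V = None /\ child true V = None) \/
     (exists s, x = rcons u true ++ s)) ->
  psize P = psize P' ->
  wilf_equiv P P' ->
  wilf_equiv (attach_right_nc S x P) (attach_right_nc S x P').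
Proof.
move=> S_contig [X [Sx X_noright]] S_right _ PP'.
have P'P := wilf_equiv_sym PP'; have S_x := pvert_S_x Sx.
have swapK_PP' := swapK S_x (bsize_wilf_match PP') S_right (wilf_matchK PP').
have swapK_P'P := swapK S_x (bsize_wilf_match P'P) S_right (wilf_matchK P'P).
apply: (wilf_equiv_of_bij swapK_PP' swapK_P'P (bsize_swap S x (bsize_wilf_match PP'))).
have contains_swap_PP' := contains_swap S_contig S_right Sx X_noright
  (bsize_wilf_match PP') (contains_wilf_match PP').
have contains_swap_P'P := contains_swap S_contig S_right Sx X_noright
  (bsize_wilf_match P'P) (contains_wilf_match P'P).
move=> T; apply/containsbP/containsbP => [/contains_swap_P'P|/contains_swap_PP'] //.
by rewrite swapK_PP'.
Qed.
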